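(* Let $\mathcal{A}:\mathbb{R}^{S^K}\to\mathbb{R}^{m_1\times m_{K+1}}$ be the lifting operator of linear maps $M_1,\dots,M_K$ and let $\mathfrak{M}$ be a family of supports, as described in the context. If $\ker\mathcal{A}\cap \mathbb{T}_{\mathcal{S}\cup\mathcal{S}'}=\{0\}$ for all $\mathcal{S},\mathcal{S}'\in\mathfrak{M}$, then $\mathcal{A}$ satisfies the Deep-$\mathfrak{M}$-Null Space Property with constants $(\gamma,\rho)=(1,+\infty)$.
   Context: Let $K,S\ge 1$ and $m_1,\dots,m_{K+1}$ be positive integers, $\mathbb{N}_S=\{1,\dots,S\}$, and for $k=1,\dots,K$ let $M_k:\mathbb{R}^S\to\mathbb{R}^{m_k\times m_{k+1}}$ be linear. Parameters are $\mathbf{h}=(\mathbf{h}_1,\dots,\mathbf{h}_K)\in\mathbb{R}^{S\times K}$ with $\mathbf{h}_k\in\mathbb{R}^S$ having entries $\mathbf{h}_{k,i}$. $\mathbb{R}^{S^K}$ denotes the space of real tensors of order $K$ with all axes of size $S$, indexed by multi-indices $\mathbf{i}=(\mathbf{i}_1,\dots,\mathbf{i}_K)\in\mathbb{N}_S^K$, with Euclidean norm $\|\cdot\|$. The Segre embedding is $P:\mathbb{R}^{S\times K}\to\mathbb{R}^{S^K}$, $P(\mathbf{h})_{\mathbf{i}}=\mathbf{h}_{1,\mathbf{i}_1}\cdots\mathbf{h}_{K,\mathbf{i}_K}$. The lifting operator $\mathcal{A}$ is the unique linear map $\mathbb{R}^{S^K}\to\mathbb{R}^{m_1\times m_{K+1}}$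 with $\mathcal{A}P(\mathbf{h})=M_1(\mathbf{h}_1)\cdots M_K(\mathbf{h}_K)$ for all $\mathbf{h}$; matrices carry the Frobenius norm. A support is $\mathcal{S}=(\mathcal{S}_1,\dots,\mathcal{S}_K)$ with $\mathcal{S}_k\subset\mathbb{N}_S$; unions are componentwise, $(\mathcal{S}\cup\mathcal{S}')_k=\mathcal{S}_k\cup\mathcal{S}'_k$; for a multi-index, $\mathbf{i}\in\mathcal{S}$ means $\mathbf{i}_k\in\mathcal{S}_k$ for all $k$. Put $\mathbb{R}^{S\times K}_{\mathcal{S}}=\{\mathbf{h}:\mathbf{h}_{k,i}=0 \text{ whenever } i\notin\mathcal{S}_k\}$ and $\mathbb{T}_{\mathcal{S}}=\{T\in\mathbb{R}^{S^K}: T_{\mathbf{i}}=0\text{ whenever }\mathbf{i}\notin\mathcal{S}\}$. $P_{\mathcal{S}}$ is the orthogonal projection onto $\mathbb{T}_{\mathcal{S}}$ (it keeps the entries with $\mathbf{i}\in\mathcal{S}$ and zeroes the others), and $\mathcal{A}_{\mathcal{S}}=\mathcal{A}P_{\mathcal{S}}$. $\mathfrak{M}$ is a given finite family of supports. Deep-$\mathfrak{M}$-Null Space Property: for $\gamma\ge1$ and $\rho>0$ (possibly $\rho=+\infty$), $\mathcal{A}$ satisfies it with constants $(\gamma,\rho)$ iff for all $\mathcal{S},\mathcal{S}'\in\mathfrak{M}$, every $T\in P(\mathbb{R}^{S\times K}_{\mathcal{S}})+P(\mathbb{R}^{S\times K}_{\mathcal{S}'})$ (a sum of an element of each set) with $\|\mathcal{A}_{\mathcal{S}\cup\mathcal{S}'}T\|\le\rho$,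 and every $T'\in\ker\mathcal{A}_{\mathcal{S}\cup\mathcal{S}'}$, one has $\|T\|\le\gamma\|T-P_{\mathcal{S}\cup\mathcal{S}'}T'\|$. *)

From HB Require Import structures.
From mathcomp Require Import all_boot all_order all_algebra.
From mathcomp Require Import reals constructive_ereal.
Set Implicit Arguments. Unset Strict Implicit. Unset Printing Implicit Defensive.
Import Order.TTheory GRing.Theory Num.Theory.
Local Open Scope ring_scope.

(* multi-indices i = (i_1,...,i_K) in N_S^K, 0-based: i : 'I_K -> 'I_S *)
Notation midx S K := {ffun 'I_K -> 'I_S}.
(* tensors in R^{S^K}; R^o is R viewed as an R-module, so tensors form an lmodType *)
Notation tensor R S K := {ffun midx S K -> R^o}.
(* parameters h in R^{S x K}: h i k = h_{k,i} *)
Notation param R S K := 'M[R]_(S, K).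
Notation supp S K := {ffun 'I_K -> {set 'I_S}}.

Section Defs.
Variables (R : realType) (S K : nat).
Local Notation midx := (midx S K).
Local Notation tensor := (tensor R S K).
Local Notation param := (param R S K).
Local Notation supp := (supp S K).

Definition supU (A B : supp) : supp := [ffun k => A k :|: B k].
Definition in_supp (A : supp) (i : midx) : bool := [forall k, i k \in A k].

Definition tnorm (T : tensor) : R := Num.sqrt (\sum_(i : midx) T i ^+ 2).
Definition fnorm m n (X : 'M[R]_(m, n)) : R :=
  Num.sqrt (\sum_(i < m) \sum_(j < n) X i j ^+ 2).

Definition segre (h : param) : tensor := [ffun i : midx => \prod_(k < K) h (i k) k].

(* k-th column h_k of h (k 0-based), zero vector if k >= K *)
Definition hcol (h : param) (k : nat) : 'cV[R]_S :=
  \col_(i < S) (match insub k with Some k' => h i k' | None => 0 end).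

Fixpoint chain (m : nat -> nat)
   (M : forall k : nat, {linear 'cV[R]_S -> 'M[R]_(m k, m k.+1)})
   (h : param) (n : nat) : 'M[R]_(m 0, m n) :=
  match n with
  | 0 => 1%:M
  | n'.+1 => chain M h n' *m M n' (hcol h n')
  end.

Definition supported_param (A : supp) (h : param) : Prop :=
  forall (i : 'I_S) (k : 'I_K), i \notin A k -> h i k = 0.
Definition in_TS (A : supp) (T : tensor) : Prop :=
  forall i : midx, ~~ in_supp A i -> T i = 0.
Definition projS (A : supp) (T : tensor) : tensor :=
  [ffun i => if in_supp A i then T i else 0].

(* Deep-M-Null Space Property with constants (gamma, rho), rho in \bar R
   (rho = +oo allowed); A_S := A o P_S. *)
Definition deep_NSP m1 mK1 (A : {linear tensor -> 'M[R]_(m1, mK1)})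
    (Mf : {set supp}) (gamma : R) (rho : \bar R) : Prop :=
  1 <= gamma /\ (0 < rho)%E /\
  forall A1 A2 : supp, A1 \in Mf -> A2 \in Mf ->
  forall T : tensor,
    (exists h1 h2 : param, supported_param A1 h1 /\ supported_param A2 h2 /\
        T = segre h1 + segre h2) ->
    ((fnorm (A (projS (supU A1 A2) T)))%:E <= rho)%E ->
  forall T' : tensor, A (projS (supU A1 A2) T') = 0 ->
    tnorm T <= gamma * tnorm (T - projS (supU A1 A2) T').

End Defs.

(* Since [A_{S u S'} T' = A (P_{S u S'} T')], the tensor [P_{S u S'} T'] lies in
   [ker A /\ T_{S u S'}], which is trivial; so the right-hand side of the null
   space inequality is just [||T||], whatever [T] and [rho] are. *)
From HB Require Import structures.
From mathcomp Require Import all_boot all_order all_algebra.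
From mathcomp Require Import reals constructive_ereal.
Import Order.TTheory GRing.Theory Num.Theory.
Local Open Scope ring_scope.

Lemma projS_in_TS (R : realType) (S K : nat) (A : supp S K) (T : tensor R S K) :
  in_TS A (projS A T).
Proof. by move=> i /negbTE iNA; rewrite ffunE iNA. Qed.

Theorem proposition1 (R : realType) (S K : nat) (m : nat -> nat)
  (M : forall k : nat, {linear 'cV[R]_S -> 'M[R]_(m k, m k.+1)})
  (A : {linear tensor R S K -> 'M[R]_(m 0, m K)})
  (Mf : {set supp S K}) :
  (0 < K)%N -> (0 < S)%N -> (forall k, (k <= K)%N -> (0 < m k)%N) ->
  (forall h : param R S K, A (segre h) = chain M h K) ->
  (forall A1 A2 : supp S K, A1 \in Mf -> A2 \in Mf ->
     forall T : tensor R S K, in_TS (supU A1 A2) T -> A T = 0 -> T = 0) ->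
  deep_NSP A Mf 1 +oo%E.
Proof.
move=> _ _ _ _ kerA_TS; split; first exact: lexx.
split; first exact: ltry.
move=> A1 A2 A1_Mf A2_Mf T _ _ T' AT'0.
have -> : projS (supU A1 A2) T' = 0.
  by apply: (kerA_TS A1 A2) => //; apply: projS_in_TS.
by rewrite subr0 mul1r.
Qed.
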